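(* Let $X$ be a finite set and let $g_1,\ldots,g_k$ be closure operators on $X$. Then the map $f:2^X\to 2^X$ defined by $f(A)=\bigcap_{i=1}^k g_i(A)$ is a closure operator (we say $f$ is generated from $g_1,\ldots,g_k$). Moreover, if $f,g_1,\ldots,g_k$ are closure operators on $X$, then $f$ is generated from $g_1,\ldots,g_k$ (i.e. $f(A)=\bigcap_{i=1}^k g_i(A)$ for all $A\subseteq X$) if and only if both of the following hold: (i) $S(g_i)\subseteq S(f)$ for all $i\in\{1,\ldots,k\}$; (ii) whenever $A\in S(f)$ and $x\in X\setminus A$, there exists $i\in\{1,\ldots,k\}$ such that $x\notin g_i(A)$.
   Context: A closure operator on $X$ is a map $f:2^X\to 2^X$ such that $A\subseteq f(A)$ for all $A$, $f(\emptyset)=\emptyset$, $f(f(A))=f(A)$, and $A\subseteq B$ implies $f(A)\subseteq f(B)$. $S(f)=\{A\subseteq X: f(A)=A\}$ is the set of closed sets of $f$. *)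

From mathcomp Require Import all_boot.
Set Implicit Arguments. Unset Strict Implicit. Unset Printing Implicit Defensive.

Definition closure_operator (X : finType) (f : {set X} -> {set X}) : Prop :=
  [/\ (forall A : {set X}, A \subset f A),
      f set0 = set0,
      (forall A : {set X}, f (f A) = f A) &
      (forall A B : {set X}, A \subset B -> f A \subset f B)].

Definition closed_sets (X : finType) (f : {set X} -> {set X}) : {set {set X}} :=
  [set A | f A == A].

Definition generated (X : finType) (k : nat) (g : 'I_k -> {set X} -> {set X})
  : {set X} -> {set X} :=
  fun A => \bigcap_(i < k) g i A.

From mathcomp Require Import all_boot.

Set Implicit Arguments.
Unset Strict Implicit.
Unset Printing Implicit Defensive.

(* If f is generated from the g_i, the closed sets of g_i are f-closed since
   f B lies between B and g_i B, and (ii) is just x \notin \bigcap_i g_i A.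
   Conversely, f A is the least f-closed superset of A, so (i) gives
   f A \subset g_i A for every i; and a point x of \bigcap_i g_i A outside f A
   would, by (ii) applied to the closed set f A, miss some g_i (f A), which
   contains g_i A. *)

Section ClosureOperator.

Variables (X : finType) (f : {set X} -> {set X}).
Hypothesis clf : closure_operator f.

Lemma closure_ext (A : {set X}) : A \subset f A.
Proof. by case: clf. Qed.

Lemma closure_idem (A : {set X}) : f (f A) = f A.
Proof. by case: clf. Qed.

Lemma closure_mono (A B : {set X}) : A \subset B -> f A \subset f B.
Proof. by case: clf => _ _ _; apply. Qed.

Lemma closure_closed (A : {set X}) : f A \in closed_sets f.
Proof. by rewrite inE closure_idem. Qed.

Lemma closure_min (A B : {set X}) :
  A \subset B -> B \in closed_sets f -> f A \subset B.
Proof. by rewrite inE => AB /eqP <-; apply: closure_mono. Qed.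

End ClosureOperator.

Section Generated.

Variables (X : finType) (k : nat) (g : 'I_k -> {set X} -> {set X}).
Hypothesis clg : forall i, closure_operator (g i).

Lemma generated_sub i (A : {set X}) : generated g A \subset g i A.
Proof. exact: bigcap_inf. Qed.

Lemma generated_ext (A : {set X}) : A \subset generated g A.
Proof. by apply/bigcapsP => i _; apply: closure_ext. Qed.

Lemma generated_mono (A B : {set X}) :
  A \subset B -> generated g A \subset generated g B.
Proof.
move=> AB; apply/bigcapsP => i _.
exact: subset_trans (generated_sub i A) (closure_mono (clg i) AB).
Qed.

Lemma generated_idem (A : {set X}) : generated g (generated g A) = generated g A.
Proof.
apply/eqP; rewrite eqEsubset generated_ext andbT; apply/bigcapsP => i _.
rewrite -(closure_idem (clg i) A).
exact: subset_trans (generated_sub i _) (closure_mono (clg i) (generated_sub i A)).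
Qed.

(* For k = 0 the empty intersection is [setT], so the hypothesis is needed. *)
Lemma generated0 : 0 < k -> generated g set0 = set0.
Proof.
move=> k_gt0; apply/eqP; rewrite -subset0.
have [_ gi0 _ _] := clg (Ordinal k_gt0).
by rewrite -{2}gi0 generated_sub.
Qed.

Lemma closure_operator_generated : 0 < k -> closure_operator (generated g).
Proof.
move=> k_gt0; split; [exact: generated_ext | exact: generated0 |
  exact: generated_idem | exact: generated_mono].
Qed.

Lemma closed_sets_generated i : closed_sets (g i) \subset closed_sets (generated g).
Proof.
apply/subsetP => B; rewrite !inE => /eqP giB.
by rewrite eqEsubset generated_ext andbT -{2}giB generated_sub.
Qed.

Lemma notin_generated (A : {set X}) (x : X) :
  x \notin generated g A -> exists i, x \notin g i A.
Proof.
move=> x_notin; have: ~~ [forall i, x \in g i A].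
  by apply: contra x_notin => /forallP x_in_all; apply/bigcapP.
by rewrite negb_forall => /existsP[i]; exists i.
Qed.

Lemma generated_separates (A : {set X}) (x : X) :
  A \in closed_sets (generated g) -> x \notin A -> exists i, x \notin g i A.
Proof. by rewrite inE => /eqP {1}<- /notin_generated. Qed.

Lemma closure_eq_generated (f : {set X} -> {set X}) :
  closure_operator f ->
  (forall i, closed_sets (g i) \subset closed_sets f) ->
  (forall A x, A \in closed_sets f -> x \notin A -> exists i, x \notin g i A) ->
  forall A, f A = generated g A.
Proof.
move=> clf closedS separates A; apply/eqP; rewrite eqEsubset; apply/andP; split.
  apply/bigcapsP => i _; apply: closure_min (closure_ext (clg i) A) _ => //.
  by apply: (subsetP (closedS i)); apply: closure_closed.
apply/subsetP => x x_gen; apply/negPn/negP => x_notin_fA.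
have [i /negP] := separates _ x (closure_closed clf A) x_notin_fA; apply.
apply: (subsetP (closure_mono (clg i) (closure_ext clf A))).
exact: (subsetP (generated_sub i A)).
Qed.

End Generated.

Theorem theorem2 (X : finType) (k : nat) (hk : 0 < k)
    (g : 'I_k -> {set X} -> {set X})
    (hg : forall i, closure_operator (g i)) :
  closure_operator (generated g) /\
  (forall f : {set X} -> {set X}, closure_operator f ->
     ((forall A : {set X}, f A = generated g A) <->
      ((forall i, closed_sets (g i) \subset closed_sets f) /\
       (forall (A : {set X}) (x : X), A \in closed_sets f -> x \notin A ->
          exists i, x \notin g i A)))).
Proof.
split; first exact: closure_operator_generated.
move=> f clf; split.
  move=> fE.
  have -> : closed_sets f = closed_sets (generated g) by apply/setP => B; rewrite !inE fE.
  by split; [exact: closed_sets_generated | move=> A x; apply: generated_separates].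
by case=> closedS separates; apply: closure_eq_generated.
Qed.
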